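(* Let $\lambda=(\lambda_1>\lambda_2>\dots>\lambda_r>0)$ be a strict partition and let $q_\lambda$ be the rational function in $q$ obtained from the Schur $Q$-function $Q_\lambda$, written as a polynomial in $Q_{(1)},Q_{(2)},\dots$, by substituting $Q_{(m)}\mapsto a_m$ for every $m\ge1$, where $$a_m=\prod_{j=1}^m \mathbf{i}\,\frac{q^{j-1}+q^{1-j}}{q^j-q^{-j}}.$$ Then $$q_\lambda=\prod_{j=1}^r a_{\lambda_j}\prod_{1\le i<j\le r}\frac{[\lambda_i-\lambda_j]}{[\lambda_i+\lambda_j]}.$$
   Context: $\mathbf{i}=\sqrt{-1}$ and $[k]=(q^k-q^{-k})/(q-q^{-1})$ is the quantum integer, $q$ a formal variable. Schur $Q$-functions as polynomials in $Q_{(1)},Q_{(2)},\dots$: set $Q_{(0)}=1$; for integers $r>s\ge0$ set $Q_{(r,s)}=Q_{(r)}Q_{(s)}+2\sum_{i=1}^{s}(-1)^iQ_{(r+i)}Q_{(s-i)}$ (so $Q_{(r,0)}=Q_{(r)}$); for a strict partition $\lambda$ with $r$ parts, append a part $\lambda_{r+1}=0$ if $r$ is odd, and define $Q_\lambda$ as the Pfaffian of the antisymmetric matrix with $(i,j)$ entry $Q_{(\lambda_i,\lambda_j)}$ for $i<j$. This expresses $Q_\lambda$ as a universal polynomial in the $Q_{(m)}$ (these are the Hall–Littlewood polynomials at $t=-1$, i.e. characters of Sergeev's polynomial representations of $\mathfrak q(N)$ up to powers of $2$). *)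

From HB Require Import structures.
From mathcomp Require Import all_boot all_order all_algebra algC fraction.
Set Implicit Arguments. Unset Strict Implicit. Unset Printing Implicit Defensive.
Import Order.TTheory GRing.Theory Num.Theory.
Local Open Scope ring_scope.

(* ---------- Schur Q-functions as universal polynomials in Q_(1), Q_(2), ... ----------
   We work with an arbitrary commutative ring R and an arbitrary assignment
   Q : nat -> R of values to Q_(1), Q_(2), ...; the value at index 0 is ignored
   and Q_(0) := 1.  Then Qlam Q lam is exactly the universal polynomial Q_lam
   evaluated at Q_(m) |-> Q m. *)

Section SchurQ.
Variable R : comPzRingType.
Variable Q : nat -> R.

Definition Qone (m : nat) : R := if m == 0%N then 1 else Q m.

Definition Qtwo (r s : nat) : R :=
  Qone r * Qone s + 2 * \sum_(1 <= i < s.+1) (-1) ^+ i * Qone (r + i) * Qone (s - i).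

(* Pfaffian of the antisymmetric matrix with (i,j)-entry (i<j) M x_i x_j,
   for the sequence of labels s = [:: x_1; ...; x_n], via the expansion along
   the first row:  Pf(x_1 :: t) = sum_k (-1)^k M x_1 t_k Pf(t without t_k).
   The natural number argument is fuel (= size of the sequence). *)
Fixpoint pfaff_aux (M : nat -> nat -> R) (fuel : nat) (s : seq nat) : R :=
  match fuel with
  | 0%N => if s is [::] then 1 else 0
  | fuel'.+1 =>
    match s with
    | [::] => 1
    | x :: t => \sum_(k < size t)
                 (-1) ^+ k * M x (nth 0%N t k) * pfaff_aux M fuel' (take k t ++ drop k.+1 t)
    end
  end.

Definition pfaff (M : nat -> nat -> R) (s : seq nat) : R := pfaff_aux M (size s) s.

Definition Qlam (lam : seq nat) : R :=
  pfaff Qtwo (if odd (size lam) then rcons lam 0%N else lam).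

End SchurQ.

Definition strict_partition (lam : seq nat) : bool :=
  sorted (fun a b => b < a)%N lam && all (fun a => 0 < a)%N lam.

Definition RF := {fraction {poly algC}}.

Definition qv : RF := FracField.tofrac ('X : {poly algC}).
Definition iv : RF := FracField.tofrac (('i : algC)%:P).

Definition qint (k : nat) : RF := (qv ^+ k - qv ^- k) / (qv - qv^-1).

Definition aq (m : nat) : RF :=
  \prod_(1 <= j < m.+1) (iv * (qv ^+ j.-1 + qv ^- j.-1) / (qv ^+ j - qv ^- j)).

From HB Require Import structures.
From mathcomp Require Import all_boot all_order all_algebra algC fraction.
From mathcomp Require Import ring.
Import Order.TTheory GRing.Theory Num.Theory.
Set Implicit Arguments. Unset Strict Implicit. Unset Printing Implicit Defensive.
Local Open Scope ring_scope.

(* Put y_m = q^(2m) and k(u, v) = (u - v)/(uv - 1), so that [a-b]/[a+b] = k(y_a, y_b).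
   The two-row functions satisfy Q_(r,s) = a_r a_s k(y_r, y_s) for r > s: both sides obey
   Q_(r,s+1) + Q_(r+1,s) = Q_(r) Q_(s+1) - Q_(r+1) Q_(s) and Q_(r,0) = Q_(r).  Hence
   q_lambda = a_lambda Pf[k(y_i, y_j)], and it remains to show the Schur-type identity
   Pf[k(x_i, x_j)] = prod_(i<j) k(x_i, x_j).  Expanding along the first row, this reduces to
   the partial fraction identity sum_x k(z, x) / prod_(y != x) k(x, y) = prod_x k(z, x) for a
   family x of odd size: as a function of z the difference of the two sides has removable
   poles at the 1/x only, hence is constant, and comparing z = -1 (where k(-1, x) = 1) with
   z = x_1 shows by induction that the constant vanishes for odd families.  A zero part
   appended to a partition of odd length gives the entry y_0 = 1, and k(x, 1) = 1. *)

Lemma gtn_trans : transitive gtn.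
Proof. exact: rev_trans ltn_trans. Qed.

Definition rem_nth (T : Type) (k : nat) (s : seq T) := take k s ++ drop k.+1 s.

Lemma map_rem_nth (T1 T2 : Type) (f : T1 -> T2) k s :
  map f (rem_nth k s) = rem_nth k (map f s).
Proof. by rewrite /rem_nth map_cat map_take map_drop. Qed.

Section RemNth.
Variable T : eqType.
Implicit Type s : seq T.

Lemma rem_nth_subseq k s : subseq (rem_nth k s) s.
Proof.
rewrite -{2}(cat_take_drop k s) cat_subseq //.
by rewrite -add1n -drop_drop drop_subseq.
Qed.

Lemma perm_rem_nth (x0 : T) k s : (k < size s)%N -> perm_eq s (nth x0 s k :: rem_nth k s).
Proof.
move=> lt_ks; rewrite -{1}(cat_take_drop k s) (drop_nth x0 lt_ks) /rem_nth.
by rewrite -cat1s perm_catCA.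
Qed.

Lemma size_rem_nth k s : (k < size s)%N -> size (rem_nth k s) = (size s).-1.
Proof. by case: s => // x s lt_ks; rewrite (perm_size (perm_rem_nth x lt_ks)). Qed.

Lemma rem_nthE (x0 : T) k s : uniq s -> (k < size s)%N -> rem_nth k s = rem (nth x0 s k) s.
Proof. by move=> s_uniq lt_ks; rewrite remE index_uniq. Qed.

End RemNth.

Section PfaffianKernel.
Variable K : fieldType.
Implicit Types (x y z : K) (w : seq K).

Definition pf_kernel x y := (x - y) / (x * y - 1).

Lemma pf_kernel_swap x y : pf_kernel y x = - pf_kernel x y.
Proof. by rewrite /pf_kernel -mulNr opprB (mulrC y). Qed.

Lemma pf_kernelxx x : pf_kernel x x = 0.
Proof. by rewrite /pf_kernel subrr mul0r. Qed.

Lemma pf_kernel_neq0 x y : x != y -> x * y != 1 -> pf_kernel x y != 0.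
Proof. by move=> neq_xy xy_neq1; rewrite mulf_neq0 ?invr_eq0 ?subr_eq0. Qed.

Lemma pf_kernelN1x x : x != -1 -> pf_kernel (-1) x = 1.
Proof.
move=> x_neqN1; rewrite /pf_kernel mulN1r addrC divff //.
by rewrite -opprD oppr_eq0 addr_eq0.
Qed.

Lemma pf_kernelx1 x : x != 1 -> pf_kernel x 1 = 1.
Proof. by move=> x_neq1; rewrite /pf_kernel mulr1 divff // subr_eq0. Qed.

Fixpoint pairs_prod w : K :=
  if w is x :: w' then \prod_(y <- w') pf_kernel x y * pairs_prod w' else 1.

Lemma pairs_prod_rcons w x :
  pairs_prod (rcons w x) = pairs_prod w * \prod_(y <- w) pf_kernel y x.
Proof.
elim: w => [|v w IHw] /=; first by rewrite !big_nil mulr1.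
by rewrite IHw big_rcons big_cons mulrACA.
Qed.

Lemma pairs_prod_ord w :
  pairs_prod w = \prod_(i < size w) \prod_(j < size w | (i < j)%N) pf_kernel w`_i w`_j.
Proof.
elim: w => [|v w IHw] /=; first by rewrite big_ord0.
rewrite big_ord_recl /= IHw; congr (_ * _).
  by rewrite [RHS]big_mkcond big_ord_recl /= mul1r (big_nth 0) big_mkord.
apply: eq_bigr => i _; rewrite [RHS]big_mkcond big_ord_recl /= mul1r big_mkcond.
by apply: eq_bigr => j _; rewrite /bump !add1n ltnS.
Qed.

Lemma pairs_prod_rem_nth w k : (k < size w)%N ->
  pairs_prod w =
    (-1) ^+ k * \prod_(y <- rem_nth k w) pf_kernel w`_k y * pairs_prod (rem_nth k w).
Proof.
elim: w k => [|v w IHw] [|k] //= lt_kw; first by rewrite /rem_nth /= drop0 mul1r.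
rewrite /rem_nth /= -/(rem_nth k w) (IHw k lt_kw) big_cons pf_kernel_swap exprS.
rewrite (perm_big _ (perm_rem_nth 0 lt_kw)) big_cons /=.
ring.
Qed.

(* The entry [1] is allowed, but only in last position: it is the image of the
   zero part appended to a partition of odd length. *)
Definition pf_admissible w :=
  [&& 0 \notin w, -1 \notin w & pairwise (fun x y => [&& x != y, x * y != 1 & x != 1]) w].

Lemma pf_admissible_subseq w1 w2 : subseq w1 w2 -> pf_admissible w2 -> pf_admissible w1.
Proof.
move=> sub12 /and3P[w2_0 w2_N1 w2_pw]; apply/and3P; split.
- by apply: contra w2_0; apply: mem_subseq.
- by apply: contra w2_N1; apply: mem_subseq.
exact: subseq_pairwise sub12 w2_pw.
Qed.

Lemma pf_admissible_cons x w :
  pf_admissible (x :: w) =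
    [&& x != 0, x != -1, all (fun y => [&& x != y, x * y != 1 & x != 1]) w & pf_admissible w].
Proof.
rewrite /pf_admissible pairwise_cons !inE !negb_or (eq_sym 0) (eq_sym (-1)).
by case: (x != 0); case: (0 \notin w); case: (x != -1); case: (-1 \notin w); rewrite /= ?andbF.
Qed.

Lemma pf_admissible_uniq w : pf_admissible w -> uniq w.
Proof.
by case/and3P=> _ _; apply: pairwise_uniq => x /=; rewrite eqxx.
Qed.

Lemma pf_admissible_mul_neq1 w :
  pf_admissible w -> {in w &, forall x y, x != y -> x * y != 1}.
Proof.
elim: w => [|v w IHw] //; rewrite pf_admissible_cons => /and4P[_ _ /allP v_w adm_w].
move=> x y; rewrite !inE => /predU1P[-> | xw] /predU1P[-> | yw]; rewrite ?eqxx //.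
- by case/and3P: (v_w y yw).
- by rewrite mulrC; case/and3P: (v_w x xw).
exact: IHw.
Qed.

Lemma pf_admissible_notin0 w : pf_admissible w -> 0 \notin w.
Proof. by case/and3P. Qed.

Lemma pf_admissible_notinN1 w : pf_admissible w -> -1 \notin w.
Proof. by case/and3P. Qed.

Lemma pf_admissible_mulN1 w : pf_admissible w -> {in w, forall x, -1 * x != 1}.
Proof.
move=> adm_w x xw; rewrite mulN1r eqr_oppLR.
by apply: contraNneq (pf_admissible_notinN1 adm_w) => <-.
Qed.

End PfaffianKernel.

Section PartialFractions.
Variable K : fieldType.
Implicit Types (x y z : K) (w : seq K).

Definition pf_cofactor x w := \prod_(y <- rem x w) pf_kernel x y.

Definition pf_defect z w :=
  \sum_(x <- w) pf_kernel z x / pf_cofactor x w - \prod_(x <- w) pf_kernel z x.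

Lemma pf_kernel_mul_subV z x : x != 0 -> z * x != 1 -> pf_kernel z x * (z - x^-1) = (z - x) / x.
Proof. by move=> x_neq0 zx_neq1; rewrite /pf_kernel; field; rewrite x_neq0 subr_eq0. Qed.

Lemma subV_div_pf_kernel x y : x != 0 -> y != 0 -> x != y ->
  (x^-1 - y^-1) / pf_kernel x y = (x^-1 - y) / y.
Proof.
move=> x_neq0 y_neq0 neq_xy; rewrite /pf_kernel invf_div; field.
by rewrite x_neq0 y_neq0 subr_eq0.
Qed.

Variable w : seq K.
Hypotheses (w_uniq : uniq w) (w_neq0 : 0 \notin w).

Let poles (s : seq K) : {poly K} := \prod_(y <- s) ('X - (y^-1)%:P).

Let defect_poly : {poly K} :=
  \sum_(x <- w) (x * pf_cofactor x w)^-1 *: (('X - x%:P) * poles (rem x w))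
  - (\prod_(x <- w) x)^-1 *: \prod_(x <- w) ('X - x%:P).

Let neq0_w x : x \in w -> x != 0.
Proof. by move=> xw; apply: contraNneq w_neq0 => <-. Qed.

Let horner_poles s z : (poles s).[z] = \prod_(y <- s) (z - y^-1).
Proof. by rewrite horner_prod; apply: eq_bigr => y _; rewrite hornerXsubC. Qed.

Lemma horner_defect_poly z : {in w, forall x, z * x != 1} ->
  defect_poly.[z] = pf_defect z w * (poles w).[z].
Proof.
move=> zw_neq1; rewrite /pf_defect mulrBl big_distrl /= !hornerE horner_sum !horner_poles.
congr (_ - _).
  apply: eq_big_seq => x xw; rewrite !hornerE !horner_poles (big_rem x xw) /=.
  set P := \prod_(y <- rem x w) _.
  transitivity (pf_kernel z x * (z - x^-1) / pf_cofactor x w * P); last by ring.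
  by rewrite pf_kernel_mul_subV ?neq0_w ?zw_neq1 // invfM; ring.
transitivity (\prod_(x <- w) ((z - x) / x)).
  by rewrite prodf_div horner_prod mulrC; under eq_bigr do rewrite hornerXsubC.
rewrite -big_split /=; apply: eq_big_seq => x xw.
by rewrite pf_kernel_mul_subV ?neq0_w ?zw_neq1.
Qed.

Lemma root_defect_poly x0 : x0 \in w -> defect_poly.[x0^-1] = 0.
Proof.
move=> x0w; have x0_neq0 := neq0_w x0w.
have mem_rem_w x y : x \in w -> y \in rem x w -> y != x /\ y \in w.
  by move=> xw; rewrite mem_rem_uniq // inE => /andP[].
rewrite !hornerE horner_sum (big_rem x0 x0w) /= big1_seq ?addr0; last first.
  move=> x /andP[_ /(mem_rem_w _ _ x0w)[x_neq_x0 xw]].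
  have x0_rx : x0 \in rem x w by rewrite mem_rem_uniq // inE eq_sym x_neq_x0.
  by rewrite !hornerE horner_poles (big_rem x0 x0_rx) /= subrr mul0r mulr0.
rewrite !hornerE horner_poles horner_prod !(big_rem x0 x0w) /=.
rewrite hornerXsubC; under [X in _ - _ * (_ * X)]eq_bigr do rewrite hornerXsubC.
have cofactor_ratio : (pf_cofactor x0 w)^-1 * \prod_(y <- rem x0 w) (x0^-1 - y^-1)
    = \prod_(y <- rem x0 w) (x0^-1 - y) / \prod_(y <- rem x0 w) y.
  rewrite /pf_cofactor -prodfV -prodf_div -big_split /=.
  apply: eq_big_seq => y /(mem_rem_w _ _ x0w)[y_neq_x0 yw].
  by rewrite mulrC subV_div_pf_kernel ?neq0_w // eq_sym.
move: cofactor_ratio; rewrite !invfM.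
set C := pf_cofactor x0 w; set A := \prod_(y <- _) (_ - y^-1).
set B := \prod_(y <- _) (_ - y); set Y := \prod_(y <- _) y => cofactor_ratio.
transitivity (x0^-1 * (x0^-1 - x0) * (C^-1 * A - B / Y)); first by ring.
by rewrite cofactor_ratio subrr mulr0.
Qed.

Lemma size_defect_poly : (size defect_poly <= (size w).+1)%N.
Proof.
rewrite (leq_trans (size_polyD _ _)) // geq_max size_polyN.
rewrite (leq_trans (size_scale_leq _ _)) ?size_prod_XsubC // andbT.
apply: (leq_trans (size_sum _ _ _)); apply/bigmax_leqP_seq => x xw _.
rewrite (leq_trans (size_scale_leq _ _)) // (leq_trans (size_polyMleq _ _)) //.
rewrite size_XsubC size_prod_XsubC size_rem // prednK //.
by case: (w) xw.
Qed.

(* [defect_poly] has degree at most [size w] and vanishes at every [x^-1], so it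
   is a constant multiple of [poles w]. *)
Lemma pf_defect_eq z1 z2 :
  {in w, forall x, z1 * x != 1} -> {in w, forall x, z2 * x != 1} ->
  pf_defect z1 w = pf_defect z2 w.
Proof.
have roots_w : all (root defect_poly) (map GRing.inv w).
  by apply/allP => _ /mapP[x xw ->]; apply/rootP/root_defect_poly.
have uniq_roots_w : uniq_roots (map GRing.inv w).
  by rewrite uniq_rootsE map_inj_uniq //; apply: invr_inj.
have [Q defect_polyE] := uniq_roots_prod_XsubC roots_w uniq_roots_w.
rewrite big_map -/(poles w) in defect_polyE.
have size_Q : (size Q <= 1)%N.
  have [-> | Q_neq0] := eqVneq Q 0; first by rewrite size_poly0.
  have := size_defect_poly; rewrite defect_polyE size_Mmonic ?monic_prod_XsubC //.
  by rewrite size_prod_XsubC addnS /= -add1n leq_add2r.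
suff defectE z : {in w, forall x, z * x != 1} -> pf_defect z w = Q`_0.
  by move=> /defectE-> /defectE->.
move=> zw_neq1; have poles_z_neq0 : (poles w).[z] != 0.
  rewrite horner_poles prodf_seq_neq0; apply/allP => x xw /=.
  by rewrite subr_eq0; apply: contraNneq (zw_neq1 x xw) => ->; rewrite mulVf ?neq0_w.
apply: (mulIf poles_z_neq0).
by rewrite -horner_defect_poly // defect_polyE {1}(size1_polyC size_Q) hornerM hornerC.
Qed.

End PartialFractions.

Section KernelExpansion.
Variable K : fieldType.
Implicit Types (x y z : K) (w : seq K).

Definition pf_invsum w := \sum_(x <- w) (pf_cofactor x w)^-1.

Lemma pf_defectN1 w : -1 \notin w -> pf_defect (-1) w = pf_invsum w - 1.
Proof.
move=> w_neqN1; have kernelN1 x : x \in w -> pf_kernel (-1) x = 1.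
  by move=> xw; apply: pf_kernelN1x; apply: contraNneq w_neqN1 => <-.
rewrite /pf_defect /pf_invsum [\prod_(x <- w) _]big1_seq => [|x /andP[_ /kernelN1]] //.
congr (_ - _).
by apply: eq_big_seq => x /kernelN1->; rewrite div1r.
Qed.

Lemma pf_defect_head v w : v \notin w -> {in w, forall y, v * y != 1} ->
  pf_defect v (v :: w) = - pf_invsum w.
Proof.
move=> v_w vw_neq1.
rewrite /pf_defect !big_cons pf_kernelxx !mul0r add0r subr0 /pf_invsum -sumrN.
apply: eq_big_seq => x xw; have v_neq_x : v != x by apply: contraNneq v_w => ->.
rewrite /pf_cofactor /= (negbTE v_neq_x) big_cons (pf_kernel_swap v) invfM mulrA.
by rewrite invrN mulrN divff ?mulN1r // pf_kernel_neq0 ?vw_neq1.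
Qed.

(* The defect is the same at [-1] and at the head [v], which gives
   [pf_invsum (v :: w) - 1 = - pf_invsum w]. *)
Lemma pf_invsum_odd w : pf_admissible w -> pf_invsum w = (odd (size w))%:R.
Proof.
elim: w => [|v w IHw] adm_vw; first by rewrite /pf_invsum big_nil.
have [w0 | w_neq0] := eqVneq w [::].
  by rewrite w0 /pf_invsum big_seq1 /pf_cofactor /= eqxx big_nil invr1.
have vw_uniq := pf_admissible_uniq adm_vw.
move: (adm_vw); rewrite pf_admissible_cons => /and4P[v_neq0 v_neqN1 /allP v_w adm_w].
have v_neq1 : v != 1.
  by case: (w) w_neq0 v_w => // y w1 _ /(_ y (mem_head _ _)) /and3P[].
have v_vw x : x \in v :: w -> v * x != 1.
  case/predU1P=> [-> | xw]; last by case/and3P: (v_w x xw).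
  by rewrite -expr2 sqrf_eq1 negb_or v_neq1.
have := pf_defect_eq vw_uniq (pf_admissible_notin0 adm_vw) (pf_admissible_mulN1 adm_vw) v_vw.
rewrite pf_defectN1 ?(pf_admissible_notinN1 adm_vw) // pf_defect_head; last 2 first.
- by case/andP: vw_uniq.
- by move=> y yw; apply: v_vw; rewrite inE yw orbT.
move/eqP; rewrite subr_eq => /eqP->; rewrite IHw //=.
by case: (odd (size w)); rewrite ?oppr0 ?add0r // addNr.
Qed.

Lemma pf_defect_odd z w : pf_admissible w -> odd (size w) ->
  {in w, forall x, z * x != 1} -> pf_defect z w = 0.
Proof.
move=> adm_w odd_w zw_neq1.
rewrite (pf_defect_eq (pf_admissible_uniq adm_w) (pf_admissible_notin0 adm_w) zw_neq1
          (pf_admissible_mulN1 adm_w)).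
by rewrite pf_defectN1 ?pf_admissible_notinN1 // pf_invsum_odd // odd_w subrr.
Qed.

Lemma pf_cofactor_neq0 w x : pf_admissible w -> x \in w -> pf_cofactor x w != 0.
Proof.
move=> adm_w xw; rewrite prodf_seq_neq0; apply/allP => y /=.
rewrite mem_rem_uniq ?pf_admissible_uniq // inE => /andP[y_neq_x yw].
have x_neq_y : x != y by rewrite eq_sym.
by rewrite pf_kernel_neq0 // (pf_admissible_mul_neq1 adm_w).
Qed.

Lemma pf_kernel_expansion z w : pf_admissible w -> odd (size w) ->
    {in w, forall x, z * x != 1} ->
  \sum_(k < size w) (-1) ^+ k * pf_kernel z w`_k * pairs_prod (rem_nth k w)
    = \prod_(x <- w) pf_kernel z x * pairs_prod w.
Proof.
move=> adm_w odd_w zw_neq1.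
have /eqP := pf_defect_odd adm_w odd_w zw_neq1; rewrite subr_eq0 => /eqP <-.
rewrite big_distrl /= (big_nth 0) big_mkord; apply: eq_bigr => k _.
have lt_kw := ltn_ord k.
rewrite (pairs_prod_rem_nth lt_kw) (rem_nthE 0 (pf_admissible_uniq adm_w) lt_kw).
have := pf_cofactor_neq0 adm_w (mem_nth 0 lt_kw); rewrite /pf_cofactor.
by set C := \prod_(y <- _) _ => C_neq0; field.
Qed.

End KernelExpansion.

Section KernelPfaffian.
Variables (K : fieldType) (M : nat -> nat -> K) (a y : nat -> K).
Hypothesis M_kernel : forall r s, (s < r)%N -> M r s = a r * a s * pf_kernel (y r) (y s).

Lemma pfaff_aux_kernel n s :
    sorted gtn s -> pf_admissible (map y s) -> ~~ odd (size s) -> (size s <= n)%N ->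
  pfaff_aux M n s = \prod_(x <- s) a x * pairs_prod (map y s).
Proof.
elim: n s => [|n IHn] [|x t] //=; try by rewrite big_nil mulr1.
rewrite pf_admissible_cons (path_sortedE gtn_trans) negbK ltnS.
move=> /andP[/allP t_lt_x t_sorted] /and4P[_ _ /allP yx_yt adm_yt] odd_t le_tn.
have yx_neq1 : {in map y t, forall y', y x * y' != 1} by move=> y' /yx_yt/and3P[].
rewrite big_cons -mulrA -(pf_kernel_expansion adm_yt _ yx_neq1) ?size_map //.
rewrite !big_distrr /=; apply: eq_bigr => -[k lt_kt] _ /=.
have sorted_rem_t : sorted gtn (rem_nth k t).
  exact: (subseq_sorted gtn_trans (rem_nth_subseq k t) t_sorted).
have adm_rem_t : pf_admissible (map y (rem_nth k t)).
  exact: pf_admissible_subseq (map_subseq _ (rem_nth_subseq k t)) adm_yt.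
have even_rem_t : ~~ odd (size (rem_nth k t)).
  by rewrite size_rem_nth //; case: (size t) odd_t => //= m; rewrite negbK.
have le_rem_tn : (size (rem_nth k t) <= n)%N.
  by rewrite size_rem_nth // (leq_trans (leq_pred _) le_tn).
rewrite -/(rem_nth k t) IHn // (M_kernel (t_lt_x _ (mem_nth 0%N lt_kt))).
rewrite (perm_big _ (perm_rem_nth 0%N lt_kt)) big_cons /=.
rewrite (nth_map 0%N) // -map_rem_nth.
ring.
Qed.

End KernelPfaffian.

Section SchurQTwoRow.
Variables (R : comPzRingType) (Q : nat -> R).

Lemma Qtwo0 r : Qtwo Q r 0 = Qone Q r.
Proof. by rewrite /Qtwo big_geq // mulr0 addr0 /Qone eqxx mulr1. Qed.

Lemma Qtwo_rec r s :
  Qtwo Q r s.+1 + Qtwo Q r.+1 s = Qone Q r * Qone Q s.+1 - Qone Q r.+1 * Qone Q s.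
Proof.
rewrite /Qtwo big_nat_recl // addn1 subn1 expr1 /=.
have -> : \sum_(1 <= i < s.+1) (-1) ^+ i.+1 * Qone Q (r + i.+1) * Qone Q (s.+1 - i.+1)
    = - \sum_(1 <= i < s.+1) (-1) ^+ i * Qone Q (r.+1 + i) * Qone Q (s - i).
  by rewrite -sumrN; apply: eq_bigr => i _; rewrite exprS addnS subSS mulN1r !mulNr.
ring.
Qed.

End SchurQTwoRow.

Section QKernel.
Variables (K : fieldType) (q : K).
Hypotheses (q_neq0 : q != 0) (qX_neq1 : forall n, (0 < n)%N -> q ^+ n != 1).
Hypothesis two_neq0 : 2 != 0 :> K.

Lemma qX_neq_lt m n : (n < m)%N -> q ^+ m != q ^+ n.
Proof.
move=> lt_nm; rewrite -(subnKC (ltnW lt_nm)) exprD -{2}[q ^+ n]mulr1.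
by rewrite (inj_eq (mulfI (expf_neq0 _ q_neq0))) qX_neq1 // subn_gt0.
Qed.

Lemma qX2_neq1 n : (0 < n)%N -> q ^+ (2 * n)%N != 1.
Proof. by move=> n_gt0; rewrite qX_neq1 // muln_gt0. Qed.

Lemma qX2_neqN1 n : q ^+ (2 * n)%N != -1.
Proof.
have [-> | n_gt0] := posnP n.
  by apply: contraNneq two_neq0; rewrite muln0 expr0 => /eqP; rewrite -addr_eq0.
apply: contra (qX_neq1 (n := (2 * n * 2)%N) _) => [/eqP qn_N1 | ].
  by rewrite exprM qn_N1 sqrrN expr1n.
by rewrite !muln_gt0 n_gt0.
Qed.

Lemma pf_admissible_qX s : sorted gtn s -> pf_admissible (map (fun n => q ^+ (2 * n)%N) s).
Proof.
elim: s => [|m s IHs] //= sorted_ms.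
rewrite pf_admissible_cons IHs ?(path_sorted sorted_ms) // andbT.
move: sorted_ms; rewrite (path_sortedE gtn_trans) => /andP[/allP s_lt_m _].
rewrite expf_neq0 // qX2_neqN1; apply/allP => _ /mapP[n ns ->].
have lt_nm := s_lt_m n ns; have m_gt0 := leq_ltn_trans (leq0n n) lt_nm.
by rewrite qX_neq_lt ?ltn_mul2l // -exprD -mulnDr !qX2_neq1 ?addn_gt0 ?m_gt0.
Qed.

Lemma pf_kernel_qX m n : (n < m)%N ->
  pf_kernel (q ^+ (2 * m)%N) (q ^+ (2 * n)%N)
    = ((q ^+ (m - n) - q ^- (m - n)) / (q - q^-1))
      / ((q ^+ (m + n) - q ^- (m + n)) / (q - q^-1)).
Proof.
move=> lt_nm; have [d d_gt0 ->] : exists2 d, (0 < d)%N & m = (n + d)%N.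
  by exists (m - n)%N; rewrite ?subn_gt0 // subnKC // ltnW.
rewrite addKn mulnDr !(mulnC 2%N) !exprD !exprM.
set B := q ^+ n; set D := q ^+ d.
rewrite /pf_kernel; field.
rewrite /B /D q_neq0 !expf_neq0 //= !subr_eq0 -expr2 -!exprD !qX_neq1 //.
by rewrite !addn_gt0 d_gt0 !orbT.
Qed.

Variables (c : K) (a : nat -> K).
Hypotheses (a0 : a 0 = 1)
  (aS : forall m, a m.+1 = a m * (c * (q ^+ m + q ^- m) / (q ^+ m.+1 - q ^- m.+1))).

Lemma QoneE : Qone a =1 a.
Proof. by case=> [|m]; rewrite /Qone ?a0. Qed.

Lemma Qtwo_qkernel r s : (s < r)%N ->
  Qtwo a r s = a r * a s * pf_kernel (q ^+ (2 * r)%N) (q ^+ (2 * s)%N).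
Proof.
elim: s r => [|s IHs] r lt_sr.
  by rewrite Qtwo0 QoneE a0 muln0 expr0 pf_kernelx1 ?mulr1 ?qX2_neq1.
have := Qtwo_rec a r s; rewrite !QoneE (IHs r.+1 (ltnW (ltnW lt_sr))) => /(canRL (addrK _)) ->.
rewrite !aS !(mulnC 2%N) !exprM !exprS.
set X := q ^+ r; set Y := q ^+ s.
rewrite /pf_kernel; field.
by rewrite /X /Y !expf_neq0 //= !subr_eq0 -!exprS -!exprD !qX_neq1 ?q_neq0 // !addnS.
Qed.

Lemma Qlam_qkernel s : strict_partition s ->
  Qlam a s = \prod_(x <- s) a x * pairs_prod (map (fun n => q ^+ (2 * n)%N) s).
Proof.
case/andP=> s_sorted /allP s_gt0.
have pfaffE t : sorted gtn t -> ~~ odd (size t) ->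
    pfaff (Qtwo a) t = \prod_(x <- t) a x * pairs_prod (map (fun n => q ^+ (2 * n)%N) t).
  move=> t_sorted even_t.
  exact: pfaff_aux_kernel Qtwo_qkernel _ _ t_sorted (pf_admissible_qX t_sorted) even_t _.
rewrite /Qlam; case: ifP => [odd_s | /negbT even_s]; last exact: pfaffE.
have sorted_s0 : sorted gtn (rcons s 0%N).
  case: s s_sorted s_gt0 {odd_s} => //= m s sorted_ms s_gt0.
  by rewrite rcons_path sorted_ms; apply: s_gt0; apply: mem_last.
rewrite pfaffE ?size_rcons /= ?odd_s //.
rewrite big_rcons /= a0 mulr1 map_rcons muln0 expr0 pairs_prod_rcons.
rewrite [X in _ * (_ * X)]big1_seq ?mulr1 //.
move=> _ /andP[_ /mapP[n ns ->]].
by rewrite pf_kernelx1 ?qX2_neq1 ?s_gt0.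
Qed.

End QKernel.

Lemma qv_neq0 : qv != 0.
Proof. by rewrite tofrac_eq0 polyX_eq0. Qed.

Lemma qvX_neq1 n : (0 < n)%N -> qv ^+ n != 1.
Proof.
move=> n_gt0; rewrite /qv -tofracXn -tofrac1 tofrac_eq.
apply: contraTneq n_gt0 => Xn1.
by have := size_polyXn algC n; rewrite Xn1 size_poly1 => -[<-].
Qed.

Lemma RF_two_neq0 : 2 != 0 :> RF.
Proof.
by rewrite -(rmorph_nat (@FracField.tofrac _)) tofrac_eq0 -polyC_natr polyC_eq0 pnatr_eq0.
Qed.

Lemma aq0 : aq 0 = 1.
Proof. by rewrite /aq big_geq. Qed.

Lemma aqS m :
  aq m.+1 = aq m * (iv * (qv ^+ m + qv ^- m) / (qv ^+ m.+1 - qv ^- m.+1)).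
Proof. by rewrite /aq big_nat_recr. Qed.

Theorem theorem2p27 (lam : seq nat) :
  strict_partition lam ->
  Qlam aq lam =
    \prod_(j < size lam) aq (nth 0%N lam j) *
    \prod_(i < size lam) \prod_(j < size lam | (i < j)%N)
       (qint (nth 0%N lam i - nth 0%N lam j) / qint (nth 0%N lam i + nth 0%N lam j)).
Proof.
move=> lam_strict.
rewrite (Qlam_qkernel qv_neq0 qvX_neq1 RF_two_neq0 aq0 aqS lam_strict).
rewrite (big_nth 0%N) big_mkord pairs_prod_ord size_map; congr (_ * _).
apply: eq_bigr => i _; apply: eq_bigr => j lt_ij.
have lt_lam : (nth 0 lam j < nth 0 lam i)%N.
  by apply: (sorted_ltn_nth gtn_trans 0%N (andP lam_strict).1); rewrite ?inE.
by rewrite !(nth_map 0%N) // (pf_kernel_qX qv_neq0 qvX_neq1 lt_lam).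
Qed.
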